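(* Let $X$ be a separable absolutely strongly star-Hurewicz space. If $Y$ is a closed and discrete subset of $X$, then $|Y|<\mathfrak{b}$.
   Context: All spaces are regular. $St(A,\mathcal{U})=\bigcup\{U\in\mathcal{U}:U\cap A\neq\emptyset\}$. $\mathfrak{b}$ is the bounding number. $X$ is absolutely strongly star-Hurewicz if for each sequence $(\mathcal{U}_n:n\in\omega)$ of open covers and each dense subset $D$ of $X$ there are finite sets $F_n\subseteq D$ ($n\in\omega$) such that every $x\in X$ lies in $St(F_n,\mathcal{U}_n)$ for all but finitely many $n$. *)

From HB Require Import structures.
From mathcomp Require Import all_boot all_order.
From mathcomp Require Import all_classical all_reals all_analysis.
Set Implicit Arguments. Unset Strict Implicit. Unset Printing Implicit Defensive.
Local Open Scope classical_set_scope.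
Local Open Scope card_scope.

Definition star (X : Type) (A : set X) (U : set (set X)) : set X :=
  \bigcup_(V in [set V | U V /\ V `&` A !=set0]) V.

Definition open_cover (X : topologicalType) (U : set (set X)) : Prop :=
  (forall V, U V -> open V) /\ \bigcup_(V in U) V = setT.

Definition separable (X : topologicalType) : Prop :=
  exists D : set X, countable D /\ dense D.

Definition abs_strongly_star_Hurewicz (X : topologicalType) : Prop :=
  forall (U : nat -> set (set X)) (D : set X),
    (forall n, open_cover (U n)) -> dense D ->
    exists F : nat -> set X,
      (forall n, finite_set (F n) /\ F n `<=` D) /\
      (forall x : X, exists N, forall n, (N <= n)%N -> star (F n) (U n) x).

Definition discrete_subset (X : topologicalType) (Y : set X) : Prop :=
  forall y, Y y -> exists V : set X, open V /\ V `&` Y = [set y].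

Definition le_star (f g : nat -> nat) : Prop :=
  exists N, forall n, (N <= n)%N -> (f n <= g n)%N.

Definition bounded_family (F : set (nat -> nat)) : Prop :=
  exists g, forall f, F f -> le_star f g.

(* b = min{|F| : F unbounded in (omega^omega, le_star)}; hence
   |Y| < b  iff  no unbounded family F has |F| <= |Y|. *)
Definition card_lt_b (T : Type) (Y : set T) : Prop :=
  forall F : set (nat -> nat), F #<= Y -> bounded_family F.

From HB Require Import structures.
From mathcomp Require Import all_boot all_order.
From mathcomp Require Import all_classical all_reals all_analysis.
Set Implicit Arguments. Unset Strict Implicit. Unset Printing Implicit Defensive.
Local Open Scope classical_set_scope.

(* Let D be a countable dense set, indexed injectively by k : X -> nat, and
   let g assign a function of nat -> nat to every point of the closed discrete
   set Y; it suffices to show that g @` Y is bounded, since |F| <= |Y| makes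
   F the image of Y under some g.  The points of Y `&` D give a countable,
   hence bounded, family.  For the points of Y `\` D, regularity lets us shrink
   an isolating neighbourhood of y in Y into open sets O y m that meet Y only
   in y and avoid every point of D of index < m other than y.  The covers
   U_n = {~` Y} u {O y (g y n) | y in Y} are fed to the star-Hurewicz property,
   giving finite F_n in D; y \notin D can only be starred by O y (g y n), which
   must then contain a point of F_n of index >= g y n, so g y is eventually
   dominated by n |-> max k(F_n). *)

Lemma bounded_subset (A B : set (nat -> nat)) :
  A `<=` B -> bounded_family B -> bounded_family A.
Proof. by move=> AB [g Bg]; exists g => f /AB /Bg. Qed.

Lemma bounded_setU (A B : set (nat -> nat)) :
  bounded_family A -> bounded_family B -> bounded_family (A `|` B).
Proof.
move=> [gA Ag] [gB Bg]; exists (fun n => gA n + gB n)%N.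
move=> f [/Ag|/Bg] [N HN]; exists N => n /HN fn.
- exact: leq_trans fn (leq_addr _ _).
- exact: leq_trans fn (leq_addl _ _).
Qed.

(* Countable families are bounded: the diagonal sum of the m-th members,
   m <= n, eventually dominates each of them. *)
Lemma countable_bounded (A : set (nat -> nat)) :
  countable A -> bounded_family A.
Proof.
move=> /pcard_injP [k k_inj].
have /choice [G HG] : forall m, exists G : nat -> nat,
    forall f, A f -> k f = m -> G = f.
  move=> m; have [[f [Af fm]]|noA] := pselect (exists f, A f /\ k f = m).
    by exists f => h Ah hm; apply: k_inj; rewrite ?inE // hm fm.
  by exists id => h Ah hm; exfalso; apply: noA; exists h.
exists (fun n => \sum_(m < n.+1) G m n)%N => f Af.
exists (k f) => n kfn; have kf_lt : (k f < n.+1)%N by rewrite ltnS.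
by rewrite (bigD1 (Ordinal kf_lt)) //= (HG _ f Af erefl) leq_addr.
Qed.

Lemma finite_index_bounded (T : Type) (A : set T) (k : T -> nat) :
  finite_set A -> exists b, forall x, A x -> (k x <= b)%N.
Proof.
move=> /(finite_image k) /finite_fsetP [s Hs].
exists (\max_(i <- finmap.enum_fset s) i)%N => x Ax.
have : (k @` A) (k x) by exists x.
by rewrite Hs /= => xs; exact: (@leq_bigmax_seq _ _ xpredT id).
Qed.

Lemma regular_indistinguishable (X : topologicalType) (x y : X) :
  regular_space X -> (forall O, open O -> O y -> O x) ->
  forall O, open O -> O x -> O y.
Proof.
move=> reg yx O oO Ox.
have [B Bx clBO] : filter_from (nbhs x) closure O.
  by apply: reg; exact: open_nbhs_nbhs.
apply: clBO => N; rewrite nbhsE; case=> O' [oO' O'y] O'N.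
by exists x; split; [exact: nbhs_singleton | exact: O'N (yx _ oO' O'y)].
Qed.

Lemma isolated_point_separated (X : topologicalType) (Y W : set X) (y x : X) :
  regular_space X -> closed Y -> open W -> W `&` Y = [set y] -> x <> y ->
  exists O, open O /\ O y /\ ~ O x.
Proof.
move=> reg cY oW WY xy.
have [Wy Yy] : (W `&` Y) y by rewrite WY.
apply: contrapT => noO.
have yx : forall O, open O -> O y -> O x.
  by move=> O oO Oy; apply: contrapT => nOx; apply: noO; exists O.
have [Yx|nYx] := pselect (Y x).
  have : (W `&` Y) x by split => //; exact: yx.
  by rewrite WY.
exact: (regular_indistinguishable reg yx (closed_openC cY) nYx) Yy.
Qed.

Lemma open_avoid_initial_segment (X : topologicalType) (D W : set X)
    (k : X -> nat) (y : X) :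
  {in D &, injective k} -> (forall x, x <> y -> exists O, open O /\ O y /\ ~ O x) ->
  open W -> W y ->
  forall m, exists O, [/\ open O, O y, O `<=` W &
    forall x, D x -> (k x < m)%N -> O x -> x = y].
Proof.
move=> k_inj sep oW Wy; elim=> [|m [V [oV Vy VW HV]]].
  by exists W; split=> // x _; rewrite ltn0.
have [[x [Dx [kx xy]]]|noD] := pselect (exists x, D x /\ k x = m /\ x <> y).
  have [Q [oQ [Qy nQx]]] := sep x xy.
  exists (V `&` Q); split => //; first exact: openI.
    by move=> z [/VW].
  move=> z Dz; rewrite ltnS leq_eqVlt => /orP [/eqP kzm|kzm] [Vz Qz].
    have zx : z = x by apply: k_inj; rewrite ?inE // kzm kx.
    by rewrite -zx in nQx.
  exact: HV.
exists V; split => // z Dz; rewrite ltnS leq_eqVlt => /orP [/eqP kzm|]; last exact: HV.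
by move=> Vz; apply: contrapT => zy; apply: noD; exists z.
Qed.

Section ClosedDiscreteSubset.
Variables (X : topologicalType) (Y D : set X) (k : X -> nat).
Hypotheses (reg : regular_space X) (cY : closed Y) (dY : discrete_subset Y).
Hypothesis k_inj : {in D &, injective k}.

Definition isolating_system (O : X -> nat -> set X) : Prop :=
  forall y m, Y y -> [/\ open (O y m), O y m y, O y m `&` Y = [set y] &
    forall x, D x -> (k x < m)%N -> O y m x -> x = y].

Lemma isolating_system_exists : exists O, isolating_system O.
Proof.
have /choice [nbd nbdP] : forall p : X * nat, exists V, Y p.1 ->
    [/\ open V, V p.1, V `&` Y = [set p.1] &
        forall x, D x -> (k x < p.2)%N -> V x -> x = p.1].
  move=> [y m]; have [Yy|] := pselect (Y y); last by exists setT.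
  have [W [oW WY]] := dY Yy; have [Wy _] : (W `&` Y) y by rewrite WY.
  have sep x : x <> y -> exists O, open O /\ O y /\ ~ O x.
    exact: isolated_point_separated reg cY oW WY.
  have [V [oV Vy VW HV]] := open_avoid_initial_segment k_inj sep oW Wy m.
  exists V => _; split => //; apply/seteqP; split; last by move=> _ ->.
  by rewrite -WY => z [/VW].
by exists (fun y m => nbd (y, m)) => y m; exact: (nbdP (y, m)).
Qed.

Definition closed_discrete_cover (O : X -> nat -> set X) (c : X -> nat) :
  set (set X) := [set V | V = ~` Y \/ exists2 y, Y y & V = O y (c y)].

Variable O : X -> nat -> set X.
Hypothesis HO : isolating_system O.

Lemma closed_discrete_open_cover (c : X -> nat) :
  open_cover (closed_discrete_cover O c).
Proof.
split=> [V [->|[y Yy ->]]|]; first exact: closed_openC.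
  by have [] := HO (c y) Yy.
apply/seteqP; split => // x _; have [Yx|nYx] := pselect (Y x).
  by exists (O x (c x)); [right; exists x | have [] := HO (c x) Yx].
by exists (~` Y) => //; left.
Qed.

Lemma star_closed_discrete_cover (A : set X) (c : X -> nat) (y : X) :
  Y y -> star A (closed_discrete_cover O c) y -> exists2 x, A x & O y (c y) x.
Proof.
move=> Yy [V [[->|[z Yz ->]] [x [Vx Ax]]] Vy]; first by [].
have [_ _ OY _] := HO (c z) Yz.
have -> : y = z by have : (O z (c z) `&` Y) y by []; rewrite OY.
by exists x.
Qed.

Lemma bounded_off_dense (g : X -> nat -> nat) :
  abs_strongly_star_Hurewicz X -> dense D -> bounded_family (g @` (Y `\` D)).
Proof.
move=> assh dD.
pose U n := closed_discrete_cover O (fun y => g y n).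
have [F [FD Fstar]] := assh U D (fun n => closed_discrete_open_cover _) dD.
have /choice [h Hh] : forall n, exists b, forall x, F n x -> (k x <= b)%N.
  by move=> n; apply: finite_index_bounded; case: (FD n).
exists h => _ [y [Yy nDy] <-]; have [N HN] := Fstar y.
exists N => n /HN /(star_closed_discrete_cover Yy) [x Fx Ox].
have [_ _ _ Oavoid] := HO (g y n) Yy.
have Dx : D x by case: (FD n) => _; apply.
apply: leq_trans (Hh n x Fx); rewrite leqNgt; apply/negP => kx_lt.
by apply: nDy; rewrite -(Oavoid x Dx kx_lt Ox).
Qed.

End ClosedDiscreteSubset.

(* |F| <= |Y| makes F an image g @` Y; split Y along the countable dense D. *)
Theorem mainTheorem11 (X : topologicalType) (Y : set X) :
  regular_space X -> separable X -> abs_strongly_star_Hurewicz X ->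
  closed Y -> discrete_subset Y -> card_lt_b Y.
Proof.
move=> reg [D [cD dD]] assh cY dY F /pcard_surjP [g FgY].
have /pcard_injP [k k_inj] := cD.
have [nbd nbdP] := isolating_system_exists reg cY dY k_inj.
apply: bounded_subset FgY _; rewrite -(setUIDK Y D) image_setU.
have bounded_outside := bounded_off_dense cY nbdP g assh dD.
apply: bounded_setU bounded_outside.
apply/countable_bounded/(card_le_trans (card_image_le _ _)).
exact: card_le_trans (subset_card_le (@subIsetr _ _ _)) cD.
Qed.
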